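(* Let $n\geq 2$ and let $\mathcal{G}=(\mathcal{V},\mathcal{E})$ be a directed graph on $\mathcal{V}=\{1,\ldots,n\}$ in which every node has at least one outgoing edge, with hyperlink matrix $A$, let $m\in(0,1)$, and let $x^*$ be the PageRank vector. Let $\{\phi(k)\}_{k\geq 0}$ be a sequence of subsets $\phi(k)\subset\mathcal{V}$ such that every $i\in\mathcal{V}$ belongs to $\phi(k)$ for infinitely many $k$. Consider the algorithm with initial states $x_i(0)=z_i(0)=m/n$ for all $i$, and for $k\geq 0$ and each $i\in\mathcal{V}$, $$x_i(k+1)=x_i(k)+\sum_{j\in\mathcal{L}_i^{\text{in}}\cap\phi(k)}\frac{1-m}{n_j}z_j(k),$$ $$z_i(k+1)=\begin{cases}\displaystyle\sum_{j\in\mathcal{L}_i^{\text{in}}\cap\phi(k)}\frac{1-m}{n_j}z_j(k)&\text{if } i\in\phi(k),\\ \displaystyle z_i(k)+\sum_{j\in\mathcal{L}_i^{\text{in}}\cap\phi(k)}\frac{1-m}{n_j}z_j(k)&\text{otherwise.}\end{cases}$$ Then $x(k)\to x^*$ as $k\to\infty$. If, in addition, there is $T>0$ such that each page belongs to at least one of $\phi(k),\phi(k+1),\ldots,\phi(k+T-1)$ for every $k\geq 0$, then the convergence is exponential, i.e., there exist $C>0$ and $\rho\in(0,1)$ with $\|x(k)-x^*\|\leq C\rho^k$ for all $k\geq 0$.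
   Context: Write $(i,j)\in\mathcal{E}$ if page $i$ has a link to page $j$. $\mathcal{L}_j^{\text{out}}=\{i:(j,i)\in\mathcal{E}\}$, $\mathcal{L}_i^{\text{in}}=\{j:(j,i)\in\mathcal{E}\}$, and $n_j=|\mathcal{L}_j^{\text{out}}|\geq 1$. The hyperlink matrix $A=(a_{ij})$ is defined by $a_{ij}=1/n_j$ if $i\in\mathcal{L}_j^{\text{out}}$ and $a_{ij}=0$ otherwise (column stochastic). The PageRank vector $x^*$ satisfies $x^*=(1-m)Ax^*+\frac{m}{n}\mathbf{1}_n$ and $\mathbf{1}_n^Tx^*=1$. Here $x(k)=(x_1(k),\ldots,x_n(k))^T$. *)

From HB Require Import structures.
From mathcomp Require Import all_boot all_order all_algebra.
From mathcomp Require Import all_classical all_reals all_analysis.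
Set Implicit Arguments. Unset Strict Implicit. Unset Printing Implicit Defensive.
Import Order.TTheory GRing.Theory Num.Theory.
Import numFieldNormedType.Exports.
Local Open Scope ring_scope.

(* A directed graph on V = 'I_n : E j i means page j links to page i. *)

Definition outdeg (n : nat) (E : rel 'I_n) (j : 'I_n) : nat := #|[set i | E j i]|.

Definition hyperlink (R : fieldType) (n : nat) (E : rel 'I_n) : 'M[R]_n :=
  \matrix_(i, j) (if E j i then (outdeg E j)%:R^-1 else 0).

Definition is_pagerank (R : fieldType) (n : nat) (E : rel 'I_n) (m : R)
    (xs : 'cV[R]_n) : Prop :=
  xs = (1 - m) *: (hyperlink R E *m xs) + (m / n%:R) *: const_mx 1
  /\ \sum_(i < n) xs i 0 = 1.

Definition inflow (R : fieldType) (n : nat) (E : rel 'I_n) (m : R)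
    (phi : {set 'I_n}) (z : 'I_n -> R) (i : 'I_n) : R :=
  \sum_(j < n | E j i && (j \in phi)) (1 - m) / (outdeg E j)%:R * z j.

Fixpoint algo (R : fieldType) (n : nat) (E : rel 'I_n) (m : R)
    (phi : nat -> {set 'I_n}) (k : nat) : ('I_n -> R) * ('I_n -> R) :=
  match k with
  | 0 => (fun _ => m / n%:R, fun _ => m / n%:R)
  | k'.+1 =>
      let xz := algo E m phi k' in
      (fun i => xz.1 i + inflow E m (phi k') xz.2 i,
       fun i => if i \in phi k' then inflow E m (phi k') xz.2 i
                else xz.2 i + inflow E m (phi k') xz.2 i)
  end.

Definition xalg (R : fieldType) (n : nat) (E : rel 'I_n) (m : R)
    (phi : nat -> {set 'I_n}) (k : nat) : 'cV[R]_n :=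
  \col_i (algo E m phi k).1 i.

From HB Require Import structures.
From mathcomp Require Import all_boot all_order all_algebra.
From mathcomp Require Import all_classical all_reals all_analysis.
From mathcomp Require Import ring lra.
Set Implicit Arguments. Unset Strict Implicit. Unset Printing Implicit Defensive.
Import Order.TTheory GRing.Theory Num.Theory.
Import numFieldNormedType.Exports.
Local Open Scope classical_set_scope.
Local Open Scope ring_scope.

(** The vector z(k) holds the PageRank mass that pages have received but not
    yet passed on.  By induction on k, x* - x(k) = (1 - m) A (x* - x(k) + z(k)),
    and since A is column stochastic, |(1 - m) A w|_1 <= (1 - m) |w|_1; hence
    m |x* - x(k)|_1 <= (1 - m) sum_i z_i(k).  The total mass
    sum_i z_i(k) never increases: an active page forwards only the share
    (1 - m) z_i(k) of its mass and keeps nothing, while the z_i of an idle page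
    can only grow.  Hence over any window of steps in which every page is active
    at least once, the mass shrinks by the factor 1 - m.  If every page is active
    infinitely often such windows start at every time, so the mass tends to 0;
    windows of bounded length T give geometric decay, with rate 1 - m/T by
    Bernoulli's inequality. *)

Lemma bernoulli_le (R : realDomainType) (a : R) (k : nat) :
  0 <= a <= 1 -> 1 - k%:R * a <= (1 - a) ^+ k.
Proof.
case/andP=> a_ge0 a_le1; elim: k => [|k IHk]; first by rewrite mul0r subr0.
rewrite exprSr; apply: le_trans (_ : (1 - k%:R * a) * (1 - a) <= _).
  have : 0 <= k%:R * a * a by rewrite !mulr_ge0.
  rewrite -natr1; lra.
by rewrite ler_wpM2r // subr_ge0.
Qed.

Section ContractingSequence.
Variables (R : realFieldType) (u : nat -> R) (q : R).
Hypothesis q_ge0 : 0 <= q.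

Lemma contraction_windows_iter :
  (forall k, exists d, u (k + d)%N <= q * u k) ->
  forall N, exists K, u K <= q ^+ N * u 0.
Proof.
move=> windows; elim=> [|N [K IHN]]; first by exists 0%N; rewrite mul1r.
have [d hd] := windows K; exists (K + d)%N.
by apply: le_trans hd _; rewrite exprS -mulrA ler_wpM2l.
Qed.

Lemma periodic_contraction_iter T :
  (forall k, u (k + T)%N <= q * u k) -> forall j, u (j * T)%N <= q ^+ j * u 0.
Proof.
move=> contr; elim=> [|j IHj]; first by rewrite mul0n mul1r.
by rewrite mulSn addnC; apply: le_trans (contr _) _; rewrite exprS -mulrA ler_wpM2l.
Qed.

End ContractingSequence.

Lemma contraction_windows_cvg0 (R : archiRealFieldType) (u : nat -> R) (q : R) :
  0 <= q < 1 -> (forall k, 0 <= u k) -> (forall k d, u (k + d)%N <= u k) ->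
  (forall k, exists d, u (k + d)%N <= q * u k) -> u @ \oo --> 0.
Proof.
move=> /andP[q_ge0 q_lt1] u_ge0 u_nonincr windows.
have qN_cvg0 : (fun N => q ^+ N * u 0) @ \oo --> 0.
  rewrite -(mul0r (u 0)); apply: cvgM; last exact: cvg_cst.
  by apply: cvg_expr; rewrite ger0_norm.
apply/cvgrPdist_le => e e_gt0.
have /cvgrPdist_le /(_ e e_gt0) [N _ hN] := qN_cvg0.
have [K hK] := contraction_windows_iter q_ge0 windows N.
exists K => // k /= le_Kk; rewrite sub0r normrN ger0_norm //.
apply: le_trans (hN N (leqnn N)); rewrite /= sub0r normrN.
by rewrite -(subnKC le_Kk); apply: le_trans (u_nonincr _ _) (le_trans hK (ler_norm _)).
Qed.

Lemma periodic_contraction_geometric (R : realFieldType) (u : nat -> R) (q : R) T :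
  (0 < T)%N -> 0 < q < 1 -> 0 <= u 0 -> (forall k d, u (k + d)%N <= u k) ->
  (forall k, u (k + T)%N <= q * u k) ->
  exists2 rho, 0 < rho < 1 & forall k, u k <= u 0 / rho ^+ T * rho ^+ k.
Proof.
move=> T_gt0 /andP[q_gt0 q_lt1] u0_ge0 u_nonincr contr.
have T_pos : 0 < T%:R :> R by rewrite ltr0n.
have a_gt0 : 0 < (1 - q) / T%:R by rewrite divr_gt0 // subr_gt0.
have a_le : (1 - q) / T%:R <= 1 - q.
  by rewrite ler_pdivrMr // ler_peMr ?ler1n // subr_ge0 ltW.
(* Chosen so that Bernoulli's inequality gives [q <= rho ^+ T]. *)
pose rho := 1 - (1 - q) / T%:R.
have rho_gt0 : 0 < rho by rewrite subr_gt0; apply: le_lt_trans a_le _; rewrite gtrBl.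
have rho_lt1 : rho < 1 by rewrite gtrBl.
have q_le : q <= rho ^+ T.
  have := @bernoulli_le _ ((1 - q) / T%:R) T.
  rewrite mulrCA mulfV ?gt_eqF // mulr1 subKr; apply.
  by rewrite (ltW a_gt0) (le_trans a_le) // gerBl ltW.
exists rho; first by rewrite rho_gt0.
move=> k; pose j := (k %/ T)%N.
have uk_le : u k <= q ^+ j * u 0.
  rewrite {1}(divn_eq k T); apply: le_trans (u_nonincr _ _) _.
  exact: (periodic_contraction_iter (ltW q_gt0) contr j).
apply: le_trans uk_le _.
rewrite mulrC -mulrA ler_wpM2l // [_ * rho ^+ k]mulrC ler_pdivlMr ?exprn_gt0 //.
apply: le_trans (_ : rho ^+ (T * j) * rho ^+ T <= _).
  apply: ler_wpM2r; first by rewrite exprn_ge0 ?ltW.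
  rewrite exprM; apply: lerXn2r => //; rewrite nnegrE ?exprn_ge0 //; exact: ltW.
rewrite -exprD ler_wiXn2l ?ltW //.
by rewrite addnC -mulnS mulnC ltnW // ltn_ceil.
Qed.

Section Residual.
Variables (R : realFieldType) (n : nat) (E : rel 'I_n) (m : R).
Hypothesis outdeg_gt0 : forall j, (0 < outdeg E j)%N.
Hypotheses (m_gt0 : 0 < m) (m_lt1 : m < 1).

(* [spread w] is [(1 - m) A w]. *)
Definition spread (w : 'I_n -> R) (i : 'I_n) : R :=
  \sum_(j < n | E j i) (1 - m) / (outdeg E j)%:R * w j.

Lemma sum_spread w : \sum_i spread w i = (1 - m) * \sum_j w j.
Proof.
rewrite /spread (exchange_big_dep xpredT) //= big_distrr; apply: eq_bigr => j _.
set c := _ / _ * w j.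
have -> : \sum_(i < n | E j i) c = \sum_(i in [set i | E j i]%SET) c.
  by apply: eq_bigl => i; rewrite inE.
by rewrite sumr_const -/(outdeg E j) -mulr_natr mulrAC divfK // pnatr_eq0 -lt0n.
Qed.

Lemma eq_spread u v : u =1 v -> spread u =1 spread v.
Proof. by move=> eq_uv i; apply: eq_bigr => j _; rewrite eq_uv. Qed.

Lemma spreadB u v i : spread (fun j => u j - v j) i = spread u i - spread v i.
Proof. by rewrite /spread -sumrB; apply: eq_bigr => j _; rewrite mulrBr. Qed.

Lemma spread_ge0 w i : (forall j, 0 <= w j) -> 0 <= spread w i.
Proof.
move=> w_ge0; apply: sumr_ge0 => j _; rewrite mulr_ge0 // divr_ge0 //.
by rewrite subr_ge0 ltW.
Qed.

Lemma inflow_spread P w i :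
  inflow E m P w i = spread (fun j => if j \in P then w j else 0) i.
Proof.
rewrite /inflow /spread big_mkcondr /=; apply: eq_bigr => j _.
by case: (j \in P); rewrite ?mulr0.
Qed.

Variable phi : nat -> {set 'I_n}.

Local Notation x k := (algo E m phi k).1.
Local Notation z k := (algo E m phi k).2.

Lemma z_ge0 k i : 0 <= z k i.
Proof.
elim: k i => [|k IHk] i /=; first by rewrite divr_ge0 // ltW.
have inflow_ge0 : 0 <= inflow E m (phi k) (z k) i.
  by rewrite inflow_spread; apply: spread_ge0 => j; case: ifP.
by case: ifP => // _; rewrite addr_ge0.
Qed.

Definition mass k := \sum_i z k i.

Lemma mass_ge0 k : 0 <= mass k.
Proof. by apply: sumr_ge0 => i _; apply: z_ge0. Qed.

Lemma mass0 : (0 < n)%N -> mass 0 = m.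
Proof.
move=> n_gt0; rewrite /mass /= sumr_const card_ord -[_ *+ n]mulr_natr divfK //.
by rewrite pnatr_eq0 -lt0n.
Qed.

Lemma massS k :
  mass k.+1 = \sum_i (if i \in phi k then (1 - m) * z k i else z k i).
Proof.
have zS i : z k.+1 i = (if i \in phi k then 0 else z k i) + inflow E m (phi k) (z k) i.
  by rewrite /=; case: ifP; rewrite ?add0r.
rewrite /mass (eq_bigr _ (fun i _ => zS i)) big_split /=.
under [X in _ + X]eq_bigr do rewrite inflow_spread.
rewrite sum_spread big_distrr -big_split /=; apply: eq_bigr => i _.
by case: ifP; rewrite ?mulr0 ?addr0 ?add0r.
Qed.

Lemma massS_le k : mass k.+1 <= mass k.
Proof.
rewrite massS; apply: ler_sum => i _; case: ifP => // _.
by rewrite ler_piMl ?z_ge0 // gerBl ltW.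
Qed.

Lemma massD_le k d : mass (k + d) <= mass k.
Proof.
elim: d => [|d IHd]; first by rewrite addn0.
by rewrite addnS; apply: le_trans (massS_le _) IHd.
Qed.

Fixpoint idle k d i : bool :=
  if d is d'.+1 then (i \notin phi (k + d')) && idle k d' i else true.

Lemma idleW k d d' i : (d <= d')%N -> idle k d' i -> idle k d i.
Proof.
elim: d' => [|d' IHd']; first by rewrite leqn0 => /eqP ->.
rewrite leq_eqVlt => /orP[/eqP -> //|]; rewrite ltnS => le_dd' /andP[_].
exact: IHd'.
Qed.

Lemma active_not_idle k d t i : (t < d)%N -> i \in phi (k + t) -> ~~ idle k d i.
Proof.
elim: d => [//|d IHd]; rewrite ltnS leq_eqVlt /= negb_and negbK.
by case/orP => [/eqP -> -> //|lt_td i_act]; rewrite IHd ?orbT.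
Qed.

Lemma z_idle_le k d i : idle k d i -> z k i <= z (k + d) i.
Proof.
elim: d => [|d IHd] /=; first by rewrite addn0.
case/andP => /negbTE i_idle /IHd; rewrite addnS /= i_idle => /le_trans; apply.
by rewrite lerDl inflow_spread; apply: spread_ge0 => j; case: ifP => // _; apply: z_ge0.
Qed.

Lemma mass_idle_le k d :
  mass (k + d) <= (1 - m) * mass k + m * \sum_i (if idle k d i then z k i else 0).
Proof.
elim: d => [|d IHd]; first by rewrite addn0 -/(mass k) mulrBl mul1r subrK.
suff step : mass (k + d).+1 - m * \sum_i (if idle k d.+1 i then z k i else 0)
         <= mass (k + d) - m * \sum_i (if idle k d i then z k i else 0).
  by rewrite addnS; lra.
rewrite massS /mass !big_distrr -!sumrB; apply: ler_sum => i _ /=.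
case: ifP => _ //=; rewrite mulr0 subr0 mulrBl mul1r lerD2l lerN2.
apply: ler_wpM2l; first exact: ltW.
by case: ifP => [/z_idle_le //|_]; apply: z_ge0.
Qed.

Lemma mass_busy_window_le k d :
  (forall i, ~~ idle k d i) -> mass (k + d) <= (1 - m) * mass k.
Proof.
move=> busy; apply: le_trans (mass_idle_le k d) _.
by rewrite big1 ?mulr0 ?addr0 // => i _; rewrite (negbTE (busy i)).
Qed.

Lemma exists_busy_window :
  (forall i N, exists k, (N <= k)%N /\ i \in phi k) ->
  forall k, exists d, forall i, ~~ idle k d i.
Proof.
move=> active_io k.
suff [d busy] : exists d, forall i, i \in enum 'I_n -> ~~ idle k d i.
  by exists d => i; apply: busy; rewrite mem_enum.
elim: (enum 'I_n) => [|a s [d busy]]; first by exists 0%N.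
have [t [le_kt a_act]] := active_io a k.
exists (maxn d (t - k).+1) => i; rewrite in_cons => /orP[/eqP ->|i_s].
  by apply: (@active_not_idle _ _ (t - k)); rewrite ?leq_max ?leqnn ?orbT ?subnKC.
by apply: contra (busy i i_s); apply: idleW; rewrite leq_maxl.
Qed.

Variable xs : 'cV[R]_n.
Hypothesis xs_pagerank : is_pagerank E m xs.

Definition err k i := xs i 0 - x k i.

Lemma err_spread k i : err k i = spread (fun j => err k j + z k j) i.
Proof.
elim: k i => [|k IHk] i.
  have xs_i := congr1 (fun M : 'cV[R]_n => M i 0) xs_pagerank.1; rewrite !mxE in xs_i.
  rewrite /err /= (@eq_spread _ (fun j => xs j 0)); last by move=> j; rewrite subrK.
  rewrite {1}xs_i big_distrr /= mulr1 addrK /spread [RHS]big_mkcond /=.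
  by apply: eq_bigr => j _; rewrite !mxE; case: ifP => _; rewrite ?mulrA ?mulr0 ?mul0r.
rewrite /err /= opprD addrA -/(err k i) IHk inflow_spread -spreadB.
by apply: eq_spread => j; rewrite /err /=; case: ifP => _; ring.
Qed.

Lemma sum_norm_err_le k : m * \sum_i `|err k i| <= (1 - m) * mass k.
Proof.
have err_le : \sum_i `|err k i| <= (1 - m) * \sum_i (`|err k i| + z k i).
  rewrite -sum_spread; apply: ler_sum => i _; rewrite err_spread.
  apply: le_trans (ler_norm_sum _ _ _) _; apply: ler_sum => j _.
  have coef_ge0 : 0 <= (1 - m) / (outdeg E j)%:R by rewrite divr_ge0 // subr_ge0 ltW.
  rewrite normrM (ger0_norm coef_ge0) ler_wpM2l //.
  by apply: le_trans (ler_normD _ _) _; rewrite (ger0_norm (z_ge0 k j)).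
rewrite big_split /= -/(mass k) in err_le; lra.
Qed.

Lemma norm_xalg_err_le k : `|xalg E m phi k - xs| <= (1 - m) / m * mass k.
Proof.
rewrite [X in X <= _]/Num.norm /= mx_normrE; apply: bigmax_le => [|[a b] _ /=].
  by rewrite mulr_ge0 ?mass_ge0 ?divr_ge0 ?subr_ge0 ?ltW.
rewrite !mxE (ord1 b) distrC -/(err k a) -(ler_pM2l m_gt0).
rewrite mulrA mulrCA mulfV ?gt_eqF // mulr1.
apply: le_trans (sum_norm_err_le k); rewrite ler_pM2l //.
by rewrite (bigD1 a) //= lerDl sumr_ge0.
Qed.

End Residual.

Section Convergence.
Variables (R : archiRealFieldType) (n : nat) (E : rel 'I_n) (m : R).
Variables (phi : nat -> {set 'I_n}) (xs : 'cV[R]_n).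
Hypothesis outdeg_gt0 : forall j, (0 < outdeg E j)%N.
Hypotheses (m_gt0 : 0 < m) (m_lt1 : m < 1).
Hypothesis xs_pagerank : is_pagerank E m xs.

Lemma xalg_cvg :
  (forall i N, exists k, (N <= k)%N /\ i \in phi k) -> xalg E m phi @ \oo --> xs.
Proof.
move=> active_io.
have mass_cvg0 : mass E m phi @ \oo --> 0.
  have damping : 0 <= 1 - m < 1 by rewrite subr_ge0 (ltW m_lt1) gtrBl.
  apply: (contraction_windows_cvg0 damping (mass_ge0 E m_gt0 m_lt1 phi)).
    exact: massD_le.
  move=> k; have [d busy] := exists_busy_window active_io k.
  by exists d; apply: mass_busy_window_le.
have bound_cvg0 : (fun k => (1 - m) / m * mass E m phi k) @ \oo --> 0.
  by rewrite -(mulr0 ((1 - m) / m)); apply: cvgM (cvg_cst _) mass_cvg0.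
apply/subr_cvg0; apply: norm_cvg0.
apply: (squeeze_cvgr _ (cvg_cst 0) bound_cvg0); apply: nearW => k.
by rewrite normr_ge0 norm_xalg_err_le.
Qed.

Lemma xalg_cvg_geometric T : (0 < n)%N -> (0 < T)%N ->
  (forall k i, exists t, (t < T)%N /\ i \in phi (k + t)%N) ->
  exists C rho : R, 0 < C /\ 0 < rho < 1 /\
    forall k, `|xalg E m phi k - xs| <= C * rho ^+ k.
Proof.
move=> n_gt0 T_gt0 active_T.
have mass_contract k : mass E m phi (k + T) <= (1 - m) * mass E m phi k.
  apply: mass_busy_window_le => // i.
  by have [t [lt_tT i_act]] := active_T k i; apply: active_not_idle lt_tT i_act.
have damping : 0 < 1 - m < 1 by rewrite subr_gt0 m_lt1 gtrBl.
have [rho /andP[rho_gt0 rho_lt1] mass_le] :=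
  periodic_contraction_geometric T_gt0 damping (mass_ge0 E m_gt0 m_lt1 phi 0)
    (massD_le outdeg_gt0 m_gt0 m_lt1 phi) mass_contract.
exists ((1 - m) / m * (mass E m phi 0 / rho ^+ T)), rho; split; last split.
- by rewrite mass0 // !mulr_gt0 ?invr_gt0 ?exprn_gt0 ?(andP damping).1.
- by rewrite rho_gt0.
move=> k; apply: le_trans (norm_xalg_err_le outdeg_gt0 m_gt0 m_lt1 phi xs_pagerank k) _.
rewrite -[X in _ <= X]mulrA; apply: ler_wpM2l (mass_le k).
by rewrite divr_ge0 ?subr_ge0 ?ltW.
Qed.

End Convergence.

Theorem theorem2 (R : realType) (n : nat) (E : rel 'I_n) (m : R)
    (xs : 'cV[R]_n) (phi : nat -> {set 'I_n}) :
  (2 <= n)%N ->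
  (forall j : 'I_n, (1 <= outdeg E j)%N) ->
  0 < m < 1 ->
  is_pagerank E m xs ->
  (forall (i : 'I_n) (N : nat), exists k : nat, (N <= k)%N /\ i \in phi k) ->
  (xalg E m phi @ \oo --> xs)
  /\ ((exists T : nat, (0 < T)%N /\
         forall (k : nat) (i : 'I_n), exists t : nat, (t < T)%N /\ i \in phi (k + t)%N) ->
      exists C rho : R, 0 < C /\ 0 < rho < 1 /\
        forall k : nat, `|xalg E m phi k - xs| <= C * rho ^+ k).
Proof.
move=> n_ge2 outdeg_gt0 /andP[m_gt0 m_lt1] xs_pagerank active_io.
split; first exact: xalg_cvg.
case=> T [T_gt0 active_T].
exact: (xalg_cvg_geometric outdeg_gt0 m_gt0 m_lt1 xs_pagerank (ltnW n_ge2) T_gt0 active_T).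
Qed.
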